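(* Let $n\geq 2$ be an integer, let $\mathcal{F}=(W,R)$ be a finite transitive frame and let $X_\mathcal{F}$ be constructed as described in the context. If $X_C$ is hereditarily $n$-irresolvable for every cluster $C$ of $\mathcal{F}$, then $X_\mathcal{F}$ is hereditarily $n$-irresolvable.
   Context: A space $X$ is $k$-resolvable ($k\ge 2$) if it has $k$ pairwise disjoint non-empty dense subsets, $k$-irresolvable otherwise, and hereditarily $k$-irresolvable if every non-empty subspace is $k$-irresolvable. For $Y\subseteq X$, $\mathrm{d}_XY$ is the set of limit points of $Y$; $S$ is crowded in $X$ if $S\subseteq\mathrm{d}_XS$. A partition is dense (resp. crowded) if all its cells are dense (resp. crowded). For a transitive frame $(W,R)$: clusters are equivalence classes of $\{(x,y):x=y\text{ or }xRyRx\}$; the cluster of $x$ is degenerate if $x$ is irreflexive (then it is $\{x\}$), non-degenerate otherwise; $CRC'$ for clusters iff $xRy$ for representatives; $CR^\uparrow C'$ means $CRC'$ and not $C'RC$. Construction of $X_\mathcal{F}$: let $\mathscr{C}$ be the set of clusters of the finite transitive frame $\mathcal{F}$. For each $C\in\mathscr{C}$ choose a space $X_C$ with a partition $\{X_w:w\in C\}$: if $C=\{w\}$ is degenerate, $X_C=X_w=\{w\}$; if $C=\{w_1,\dots,w_k\}$ is non-degenerate, $X_C$ is a space with a crowded dense $k$-partition with cells labelled $X_{w_1},\dots,X_{w_k}$. The $X_C$ are pairwise disjoint. $X_\mathcal{F}=\bigcup_{C}X_C$, where $O\subseteq X_\mathcal{F}$ is open iff for every $C$, $O\cap X_C$ is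 open in $X_C$, and if $O\cap X_C\ne\emptyset$ then $X_{C'}\subseteq O$ for all $C'$ with $CR^\uparrow C'$. *)

From mathcomp Require Import all_boot.
From mathcomp Require Import boolp classical_sets.
Set Implicit Arguments. Unset Strict Implicit. Unset Printing Implicit Defensive.
Local Open Scope classical_set_scope.

(* A (sub)space is given by a carrier set S inside an ambient type T together
   with its family of open sets op (all subsets of S). *)
Definition is_topology {T : Type} (S : set T) (op : set T -> Prop) : Prop :=
  [/\ (forall U, op U -> U `<=` S),
      op set0, op S,
      (forall G : set (set T), G `<=` op -> op (\bigcup_(U in G) U))
    & (forall U V, op U -> op V -> op (U `&` V))].

Definition subspace_open {T : Type} (op : set T -> Prop) (Y : set T) (V : set T) : Prop :=
  exists U, op U /\ V = U `&` Y.

Definition dense_in {T : Type} (S : set T) (op : set T -> Prop) (D : set T) : Prop :=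
  D `<=` S /\ (forall U, op U -> U !=set0 -> U `&` D !=set0).

Definition limit_points {T : Type} (S : set T) (op : set T -> Prop) (Y : set T) : set T :=
  [set x | S x /\ (forall U, op U -> U x -> exists y, [/\ U y, Y y & y <> x])].

Definition crowded_in {T : Type} (S : set T) (op : set T -> Prop) (A : set T) : Prop :=
  A `<=` limit_points S op A.

Definition resolvable {T : Type} (k : nat) (S : set T) (op : set T -> Prop) : Prop :=
  exists D : 'I_k -> set T,
    [/\ (forall i, D i !=set0),
        (forall i j, i != j -> D i `&` D j = set0)
      & (forall i, dense_in S op (D i))].

Definition irresolvable {T : Type} (k : nat) (S : set T) (op : set T -> Prop) : Prop :=
  ~ resolvable k S op.

Definition hered_irresolvable {T : Type} (k : nat) (S : set T) (op : set T -> Prop) : Prop :=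
  forall Y : set T, Y `<=` S -> Y !=set0 -> irresolvable k Y (subspace_open op Y).

Definition cluster {W : finType} (R : rel W) (w : W) : {set W} :=
  [set v | (v == w) || (R w v && R v w)].

(* The construction X_F: the carrier is the ambient type T, each point x lies in the
   cell X_(lab x); X_C for the cluster C of w is the union of the cells X_v, v in C. *)
Definition Xcell {T : Type} {W : finType} (lab : T -> W) (v : W) : set T :=
  [set x | lab x = v].

Definition Xclus {T : Type} {W : finType} (R : rel W) (lab : T -> W) (w : W) : set T :=
  [set x | lab x \in cluster R w].

Definition XF_construction {T : Type} {W : finType} (R : rel W) (lab : T -> W)
    (tau : {set W} -> set T -> Prop) : Prop :=
  forall w : W,
    is_topology (Xclus R lab w) (tau (cluster R w)) /\
    (if R w w then
       (* non-degenerate cluster: {X_v : v in C} is a crowded dense partition of X_C *)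
       forall v, v \in cluster R w ->
         [/\ Xcell lab v !=set0,
             dense_in (Xclus R lab w) (tau (cluster R w)) (Xcell lab v)
           & crowded_in (Xclus R lab w) (tau (cluster R w)) (Xcell lab v)]
     else
       (* degenerate cluster {w}: X_C = X_w is a single point *)
       exists x : T, Xclus R lab w = [set x]).

Definition XF_open {T : Type} {W : finType} (R : rel W) (lab : T -> W)
    (tau : {set W} -> set T -> Prop) (O : set T) : Prop :=
  forall w : W,
    tau (cluster R w) (O `&` Xclus R lab w) /\
    (O `&` Xclus R lab w !=set0 ->
       forall v : W, R w v -> ~~ R v w -> Xclus R lab v `<=` O).

(* Choose a point w whose cluster C meets Y and is R-up-maximal among the
   clusters meeting Y.  For U open in X_C, the set U together with every X_v,
   w R^up v, is open in X_F and meets Y only inside U.  Hence tracing on X_C an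
   n-partition of Y into dense sets yields an n-partition of Y `&` X_C into
   dense sets, contradicting the hereditary n-irresolvability of X_C.  Neither
   the partitions of the X_C nor the bound 2 <= n enter the argument. *)
From mathcomp Require Import all_boot.
From mathcomp Require Import boolp classical_sets.
Local Open Scope classical_set_scope.
Set Implicit Arguments. Unset Strict Implicit.

Section FiniteStrictOrder.
Variables (W : finType) (r : rel W).
Hypotheses (r_irr : irreflexive r) (r_trans : transitive r).

Lemma card_succ_lt w v : r w v -> (#|[pred u | r v u]| < #|[pred u | r w u]|)%N.
Proof.
move=> rwv; apply: proper_card; apply/properP; split.
  by apply/fintype.subsetP => u; rewrite !inE; apply: r_trans.
by exists v; rewrite !inE ?r_irr.
Qed.

Lemma exists_maximal (P : W -> Prop) y :
  P y -> exists2 w, P w & forall v, P v -> ~~ r w v.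
Proof.
move: {2}#|_| (erefl #|[pred u | r y u]|) => k.
elim/ltn_ind: k y => k IH y def_k Py.
have [[v [Pv ryv]]|no_succ] := pselect (exists v, P v /\ r y v).
  by apply: (IH _ _ v erefl Pv); rewrite -def_k card_succ_lt.
by exists y => // v Pv; apply/negP => ryv; apply: no_succ; exists v.
Qed.

End FiniteStrictOrder.

Section Clusters.
Variables (W : finType) (R : rel W).
Hypothesis R_trans : transitive R.

Definition Rup (w v : W) := R w v && ~~ R v w.

Lemma Rup_irr : irreflexive Rup.
Proof. by move=> w; rewrite /Rup andbN. Qed.

Lemma Rup_trans : transitive Rup.
Proof.
move=> u w v /andP[Rwu Ruw] /andP[Ruv Rvu]; rewrite /Rup (R_trans Rwu Ruv) /=.
by apply: contra Rvu => /R_trans; apply.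
Qed.

Lemma cluster_sym u v : v \in cluster R u -> u \in cluster R v.
Proof. by rewrite !inE => /orP[/eqP->|/andP[-> ->]]; rewrite ?eqxx ?orbT. Qed.

Lemma cluster_trans u v x :
  v \in cluster R u -> x \in cluster R v -> x \in cluster R u.
Proof.
rewrite !inE => /orP[/eqP->//|/andP[Ruv Rvu]] /orP[/eqP->|/andP[Rvx Rxv]].
  by rewrite Ruv Rvu orbT.
by rewrite (R_trans Ruv Rvx) (R_trans Rxv Rvu) orbT.
Qed.

Lemma eq_cluster u w : u \in cluster R w -> cluster R u = cluster R w.
Proof.
move=> uw; apply/setP => x; apply/idP/idP; first exact: cluster_trans.
exact: cluster_trans (cluster_sym uw).
Qed.

Lemma cluster_Rupl u w v : u \in cluster R w -> Rup u v -> Rup w v.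
Proof.
rewrite inE => /orP[/eqP->//|/andP[Rwu Ruw]] /andP[Ruv Rvu].
rewrite /Rup (R_trans Rwu Ruv) /=; apply: contra Rvu => Rvw.
exact: R_trans Rvw Rwu.
Qed.

Lemma cluster_Rupr w v x : Rup w v -> x \in cluster R v -> Rup w x.
Proof.
move=> /andP[Rwv Rvw]; rewrite inE => /orP[/eqP->|/andP[Rvx Rxv]].
  by rewrite /Rup Rwv.
rewrite /Rup (R_trans Rwv Rvx) /=; apply: contra Rvw => Rxw.
exact: R_trans Rvx Rxw.
Qed.

Lemma cluster_Rup w x : x \in cluster R w -> ~~ Rup w x.
Proof.
by rewrite inE => /orP[/eqP->|/andP[_ Rxw]]; rewrite /Rup ?andbN ?Rxw ?andbF.
Qed.

End Clusters.

Section Construction.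
Variables (T : Type) (W : finType) (R : rel W) (lab : T -> W).
Variable tau : {set W} -> set T -> Prop.
Hypothesis R_trans : transitive R.
Hypothesis tau_top : forall w, is_topology (Xclus R lab w) (tau (cluster R w)).

Let tauC w := tau (cluster R w).

Lemma tau_sub w U : tauC w U -> U `<=` Xclus R lab w.
Proof. by case: (tau_top w) => + _ _ _ _; apply. Qed.

Definition up_extension w (U : set T) : set T :=
  [set x | U x \/ Rup R w (lab x)].

Lemma up_extension_cluster w U u x :
  tauC w U -> up_extension w U x -> Xclus R lab u x ->
  u \in cluster R w \/ Rup R w u.
Proof.
move=> tU [Ux|Rwx] xu; [left|right].
  have xw : lab x \in cluster R w := tau_sub tU Ux.
  exact: (cluster_trans R_trans xw (cluster_sym xu)).
exact: (cluster_Rupr R_trans Rwx (cluster_sym xu)).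
Qed.

Lemma up_extension_trace w U u : tauC w U ->
  up_extension w U `&` Xclus R lab u =
  if u \in cluster R w then U
  else if Rup R w u then Xclus R lab u else set0.
Proof.
move=> tU; apply/seteqP; split=> x.
  move=> [Ox xu]; have [uw|Rwu] := up_extension_cluster tU Ox xu.
    have xw := cluster_trans R_trans uw xu.
    by rewrite uw; case: Ox => // Rwx; move: (cluster_Rup xw); rewrite Rwx.
  by rewrite Rwu; case: ifP => // uw; move: (cluster_Rup uw); rewrite Rwu.
case: ifP => [uw Ux|_].
  have xw : lab x \in cluster R w := tau_sub tU Ux.
  by split; [left|exact: (cluster_trans R_trans (cluster_sym uw) xw)].
case: ifP => // Rwu xu; split=> //; right.
exact: (cluster_Rupr R_trans Rwu xu).
Qed.

Lemma up_extension_open w U : tauC w U -> XF_open R lab tau (up_extension w U).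
Proof.
move=> tU u; split.
  rewrite up_extension_trace //; case: ifP => [uw|_].
    by rewrite /tauC (eq_cluster R_trans uw).
  by case: ifP => _; case: (tau_top u).
move=> [x [Ox xu]] v Ruv Rvu y yv; right; apply: (cluster_Rupr R_trans _ yv).
have Rup_uv : Rup R u v by rewrite /Rup Ruv.
have [uw|Rwu] := up_extension_cluster tU Ox xu.
  exact: (cluster_Rupl R_trans uw Rup_uv).
exact: (Rup_trans R_trans Rwu Rup_uv).
Qed.

Lemma dense_trace w Y D :
  (forall y, Y y -> ~~ Rup R w (lab y)) ->
  dense_in Y (subspace_open (XF_open R lab tau) Y) D ->
  dense_in (Y `&` Xclus R lab w) (subspace_open (tauC w) (Y `&` Xclus R lab w))
    (D `&` Xclus R lab w).
Proof.
move=> Ymax [DY Ddense]; split=> [x [Dx xw]|_ [U [tU ->]] [z [Uz [Yz zw]]]].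
  by split=> //; apply: DY.
have OY_open : subspace_open (XF_open R lab tau) Y (up_extension w U `&` Y).
  by exists (up_extension w U); split=> //; apply: up_extension_open.
have OY_ne : up_extension w U `&` Y !=set0 by exists z; split=> //; left.
have [y [[[Uy|Rwy] Yy] Dy]] := Ddense _ OY_open OY_ne.
  by have yw := tau_sub tU Uy; exists y; do !split.
by move: (Ymax y Yy); rewrite Rwy.
Qed.

Lemma resolvable_trace n w Y :
  (forall y, Y y -> ~~ Rup R w (lab y)) -> Y `&` Xclus R lab w !=set0 ->
  resolvable n Y (subspace_open (XF_open R lab tau) Y) ->
  resolvable n (Y `&` Xclus R lab w)
    (subspace_open (tauC w) (Y `&` Xclus R lab w)).
Proof.
move=> Ymax [z Yz] [D [_ Ddisj Ddense]].
exists (fun i => D i `&` Xclus R lab w); split.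
- move=> i; have [_ Ddense_w] := dense_trace Ymax (Ddense i).
  have YX_open :
      subspace_open (tauC w) (Y `&` Xclus R lab w) (Y `&` Xclus R lab w).
    exists (Xclus R lab w); split; first by case: (tau_top w).
    by rewrite setICA setIid.
  have [x [_ Dx]] := Ddense_w _ YX_open (ex_intro _ z Yz).
  by exists x.
- move=> i j ij; apply/seteqP; split=> x // [[Dix _] [Djx _]].
  by rewrite -(Ddisj i j ij).
- by move=> i; apply: dense_trace.
Qed.

End Construction.

Theorem lemma5 (n : nat) (W : finType) (R : rel W) (T : Type)
    (lab : T -> W) (tau : {set W} -> set T -> Prop) :
  (2 <= n)%N ->
  transitive R ->
  XF_construction R lab tau ->
  (forall w : W, hered_irresolvable n (Xclus R lab w) (tau (cluster R w))) ->
  hered_irresolvable n setT (XF_open R lab tau).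
Proof.
move=> _ R_trans XF irr Y _ [y Yy] resY.
have tau_top w := (XF w).1.
have [w [x Yx <-] wmax] := exists_maximal (Rup_irr R) (Rup_trans R_trans)
  (P := fun w => exists2 x, Y x & lab x = w) (ex_intro2 _ _ y Yy erefl).
have xw : Xclus R lab (lab x) x by rewrite /Xclus /= inE eqxx.
apply: (irr (lab x) (Y `&` Xclus R lab (lab x))); first by move=> ? [].
  by exists x.
apply: (resolvable_trace R_trans tau_top) resY; last by exists x.
by move=> z Yz; apply: wmax; exists z.
Qed.
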